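(* Let $T$ be a finite tree, let $\mathcal{F}$ be a finite family of subtrees of $T$, and let $G$ be the disjointness graph of $\mathcal{F}$ (vertices are the members of $\mathcal{F}$, two adjacent iff they are vertex-disjoint); equivalently, $G$ is the complement of a chordal graph. Then $c(G)\le p(G)\le 2$.
   Context: A comparability graph is a graph admitting a transitive orientation. $p(G)$ is the minimum number $m$ such that $E(G)$ is the union of the edge sets of $m$ pairwise edge-disjoint comparability subgraphs of $G$; $c(G)$ is the minimum number of comparability subgraphs of $G$ (not necessarily edge-disjoint) whose edge sets cover $E(G)$. *)

From mathcomp Require Import all_boot.
Set Implicit Arguments. Unset Strict Implicit. Unset Printing Implicit Defensive.

Definition simple_graph (T : finType) (t : rel T) : Prop :=
  symmetric t /\ irreflexive t.

Definition acyclic (T : finType) (t : rel T) : Prop :=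
  forall s : seq T, uniq s -> 3 <= size s -> ~~ cycle t s.

Definition connected_graph (T : finType) (t : rel T) : Prop :=
  forall x y : T, connect t x y.

Definition is_tree (T : finType) (t : rel T) : Prop :=
  [/\ simple_graph t, 0 < #|T|, connected_graph t & acyclic t].

Definition induced (T : finType) (t : rel T) (S : {set T}) : rel T :=
  [rel a b | [&& a \in S, b \in S & t a b]].

(* a subtree of the tree t: a nonempty vertex set inducing a connected
   subgraph (which is then automatically a tree) *)
Definition is_subtree (T : finType) (t : rel T) (S : {set T}) : Prop :=
  S != set0 /\ {in S &, forall x y, connect (induced t S) x y}.

Definition disjointness_graph (T I : finType) (F : I -> {set T}) : rel I :=
  [rel i j | [disjoint F i & F j]].

Definition edge_set (V : finType) (E : rel V) : {set V * V} :=
  [set e | E e.1 e.2].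

Definition sym_set (V : finType) (H : {set V * V}) : bool :=
  [forall u, forall v, ((u, v) \in H) ==> ((v, u) \in H)].

Definition transitive_orientation (V : finType) (H O : {set V * V}) : bool :=
  [&& O \subset H,
      [forall u, forall v, ((u, v) \in H) ==>
          (((u, v) \in O) (+) ((v, u) \in O))] &
      [forall u, forall v, forall w,
          ((u, v) \in O) && ((v, w) \in O) ==> ((u, w) \in O)]].

Definition comparability_subgraph (V : finType) (E : rel V) (H : {set V * V}) : bool :=
  [&& H \subset edge_set E, sym_set H &
      [exists O : {set V * V}, transitive_orientation H O]].

Definition comp_partition (V : finType) (E : rel V) (m : nat) : bool :=
  [exists Hs : {ffun 'I_m -> {set V * V}},
    [&& [forall i, comparability_subgraph E (Hs i)],
        [forall i, forall j, (i != j) ==> [disjoint Hs i & Hs j]] &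
        edge_set E == \bigcup_i Hs i]].

Definition comp_cover (V : finType) (E : rel V) (m : nat) : bool :=
  [exists Hs : {ffun 'I_m -> {set V * V}},
    [forall i, comparability_subgraph E (Hs i)] &&
    (edge_set E == \bigcup_i Hs i)].

(* least m satisfying P among 0..N; the bound N = #|V|*#|V| is always
   large enough (one subgraph per edge), so this is the true minimum. *)
Definition least_upto (P : pred nat) (N : nat) : nat := find P (iota 0 N.+1).

Definition p_num (V : finType) (E : rel V) : nat :=
  least_upto (comp_partition E) (#|V| * #|V|).

Definition c_num (V : finType) (E : rel V) : nat :=
  least_upto (comp_cover E) (#|V| * #|V|).

From mathcomp Require Import all_boot all_order.
Set Implicit Arguments. Unset Strict Implicit. Unset Printing Implicit Defensive.
Import Order.TTheory.

(* Root the tree at r.  Every subtree F i has a top vertex, an ancestor of all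
   its vertices, so two subtrees can only meet when their tops are comparable
   in the ancestor order.  The disjoint pairs with comparable tops are
   oriented from the upper top to the lower one; this is transitive because a
   subtree is convex: if top u <= top v <= top w and x lies in F u and F w,
   then top v lies between top u and x, hence in F u.  The pairs with
   incomparable tops are all disjoint, and are oriented by the order in which
   their root paths branch apart, compared lexicographically.  These two
   comparability subgraphs partition the edges, so p <= 2, and c <= p because
   a partition is a cover. *)

Definition simple_path (T : eqType) (e : rel T) (x : T) (p : seq T) (y : T) :=
  [&& path e x p, last x p == y & uniq (x :: p)].

Lemma connect_simple_path (T : finType) (e : rel T) x y :
  connect e x y -> exists p, simple_path e x p y.
Proof.
case/connectP=> p e_p ->; case/shortenP: e_p => q e_q u_q _.
by exists q; rewrite /simple_path e_q eqxx u_q.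
Qed.

Lemma simple_path_cat (T : eqType) (e : rel T) x p s y :
  simple_path e x (p ++ s) y ->
  simple_path e x p (last x p) /\ simple_path e (last x p) s y.
Proof.
rewrite /simple_path cat_path last_cat -cat_cons cat_uniq.
case/and3P=> /andP[e_p e_s] l_s /and3P[u_p dis u_s].
split; first by rewrite e_p eqxx u_p.
rewrite e_s l_s /= u_s andbT; apply: contra dis => p_s.
by apply/hasP; exists (last x p); last exact: mem_last.
Qed.

Lemma prefix_total (T : eqType) (s1 s2 s3 : seq T) :
  prefix s1 s3 -> prefix s2 s3 -> prefix s1 s2 || prefix s2 s1.
Proof.
elim: s3 s1 s2 => [|x s3 IH] [|y s1] [|z s2] //=.
by case/andP=> /eqP-> /IH h /andP[/eqP-> /h]; rewrite eqxx.
Qed.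

Lemma prefix_anti (T : eqType) (s1 s2 : seq T) :
  prefix s1 s2 -> prefix s2 s1 -> s1 = s2.
Proof.
move=> p12 p21; have /eqP size12 : size s1 == size s2.
  by rewrite eqn_leq (size_prefix p12) (size_prefix p21).
by move: p12; rewrite prefixE size12 take_size => /eqP.
Qed.

Lemma prefix_map_inj (T1 T2 : eqType) (f : T1 -> T2) s1 s2 :
  injective f -> prefix (map f s1) (map f s2) = prefix s1 s2.
Proof.
by move=> f_inj; elim: s2 s1 => [|y s2 IH] [|x s1] //=; rewrite inj_eq // IH.
Qed.

Section BranchOrder.
Variables (d : Order.disp_t) (X : orderType d).

Fixpoint branch_lt (s1 s2 : seq X) : bool :=
  match s1, s2 with
  | x :: s1', y :: s2' => (x < y)%O || (x == y) && branch_lt s1' s2'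
  | _, _ => false
  end.

Lemma branch_lt_irr : irreflexive branch_lt.
Proof. by elim=> //= x s ->; rewrite ltxx eqxx. Qed.

Lemma branch_lt_trans : transitive branch_lt.
Proof.
elim=> [|y s2 IH] [|x s1] [|z s3] //=.
case/orP=> [xy|/andP[/eqP-> l1]]; case/orP=> [yz|/andP[/eqP<- l2]].
- by rewrite (lt_trans xy yz).
- by rewrite xy.
- by rewrite yz.
- by rewrite eqxx (IH _ _ l1 l2) orbT.
Qed.

Lemma branch_lt_asym s1 s2 : branch_lt s1 s2 -> ~~ branch_lt s2 s1.
Proof. by move=> l12; apply/negP=> /(branch_lt_trans l12); rewrite branch_lt_irr. Qed.

Lemma branch_lt_gt s1 s2 :
  branch_lt s1 s2 || branch_lt s2 s1 = ~~ prefix s1 s2 && ~~ prefix s2 s1.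
Proof.
elim: s1 s2 => [|x s1 IH] [|y s2] //=.
by case: ltgtP => //= _; apply: IH.
Qed.

End BranchOrder.

Section Tree.
Variables (T : finType) (t : rel T).
Hypotheses (t_sym : symmetric t) (t_irr : irreflexive t) (t_acyclic : acyclic t).

Lemma acyclic_nbrs_path x y z s :
  t x y -> t x z -> y != z -> path t y s -> last y s = z -> x \in y :: s.
Proof.
move=> t_xy t_xz yz t_s l_s; apply: contraT => xNs; move: l_s.
case/shortenP: t_s => s' t_s' u_s' sub_s' l_s'.
have xNs' : x \notin y :: s'.
  by apply: contra xNs; rewrite !inE => /orP[-> // | /sub_s' ->]; rewrite orbT.
case: s' t_s' u_s' l_s' xNs' {sub_s'} => [|w s'] t_s' u_s' l_s' xNs'.
  by rewrite -l_s' eqxx in yz.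
have u_cycle : uniq [:: x, y, w & s'] by rewrite cons_uniq xNs' u_s'.
case/negP: (t_acyclic u_cycle isT).
move: t_s' l_s' => /= /andP[-> t_s'] l_s'.
by rewrite t_xy rcons_path t_s' l_s' t_sym.
Qed.

Lemma simple_path_unique x p q y :
  simple_path t x p y -> simple_path t x q y -> p = q.
Proof.
case/and3P=> t_p /eqP <- u_p /and3P[t_q /eqP l_q u_q].
elim: p x q t_p u_p t_q l_q u_q => [|w p IH] x [|z q] //=.
- by move=> _ _ _ <- /andP[]; rewrite mem_last.
- by move=> _ /andP[+ _] _ l_q _; rewrite {1}l_q mem_last.
move=> /andP[t_xw t_p] /andP[xNp u_p] /andP[t_xz t_q] l_q /andP[xNq u_q].
have [Ewz | wz] := eqVneq w z; first by subst z; rewrite (IH w q t_p u_p t_q l_q u_q).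
have t_s : path t w (p ++ rev (belast z q)).
  have t_sym' : (fun a b => t b a) =2 t by move=> a b; rewrite t_sym.
  by rewrite cat_path t_p -l_q rev_path (eq_path t_sym').
have l_s : last w (p ++ rev (belast z q)) = z.
  by rewrite last_cat -l_q; case: (q) => [|v q'] //=; rewrite rev_cons last_rcons.
have := acyclic_nbrs_path t_xw t_xz wz t_s l_s.
rewrite -cat_cons mem_cat mem_rev (negbTE xNp) /=.
by move/mem_belast; rewrite (negbTE xNq).
Qed.

Hypothesis t_conn : connected_graph t.
Variable r : T.

Definition rpath (v : T) : seq T := xchoose (connect_simple_path (t_conn r v)).

Definition ancestor (a v : T) : bool := a \in r :: rpath v.

Lemma rpathP v : simple_path t r (rpath v) v.
Proof. exact: (xchooseP (connect_simple_path (t_conn r v))). Qed.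

Lemma last_rpath v : last r (rpath v) = v.
Proof. by case/and3P: (rpathP v) => _ /eqP. Qed.

Lemma rpath_unique v p : simple_path t r p v -> rpath v = p.
Proof. exact: simple_path_unique (rpathP v). Qed.

Lemma rpath_root : rpath r = [::].
Proof. by apply: rpath_unique; rewrite /simple_path /= eqxx. Qed.

Lemma rpath_inj : injective rpath.
Proof. by move=> u v E; rewrite -(last_rpath u) E last_rpath. Qed.

Lemma ancestorE a v : ancestor a v = prefix (rpath a) (rpath v).
Proof.
rewrite /ancestor; apply/idP/prefixP => [|[s ->]]; last first.
  by rewrite -cat_cons mem_cat -{1}(last_rpath a) mem_last.
rewrite inE => /predU1P[-> | a_v]; first by exists (rpath v); rewrite rpath_root.
case/splitPr E: {1}(rpath v) / a_v => [p1 p2].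
have := rpathP v; rewrite E -cat_rcons => /simple_path_cat[].
by rewrite last_rcons => /rpath_unique-> _; exists p2; rewrite cat_rcons.
Qed.

Lemma ancestor_refl : reflexive ancestor.
Proof. by move=> a; rewrite ancestorE prefix_refl. Qed.

Lemma ancestor_trans a b c : ancestor a b -> ancestor b c -> ancestor a c.
Proof. by rewrite !ancestorE; apply: prefix_trans. Qed.

Lemma ancestor_anti a b : ancestor a b -> ancestor b a -> a = b.
Proof. by rewrite !ancestorE => ab ba; apply/rpath_inj/prefix_anti. Qed.

Lemma ancestor_total a b x :
  ancestor a x -> ancestor b x -> ancestor a b || ancestor b a.
Proof. by rewrite !ancestorE; apply: prefix_total. Qed.

Lemma rpath_edge u w :
  t u w -> rpath w = rcons (rpath u) w \/ rpath u = rcons (rpath w) u.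
Proof.
move=> t_uw; have [w_u | wNu] := boolP (ancestor w u).
  right; move: w_u; rewrite ancestorE => /prefixP[s E].
  have := rpathP u; rewrite E => /simple_path_cat[_]; rewrite last_rpath => sp_s.
  suff -> : s = [:: u] by rewrite cats1.
  apply: simple_path_unique sp_s _.
  rewrite /simple_path /= t_sym t_uw eqxx inE /= andbT.
  by apply: contraTneq t_uw => ->; rewrite t_irr.
left; apply: rpath_unique.
rewrite /simple_path rcons_path last_rcons -rcons_cons rcons_uniq wNu.
by case/and3P: (rpathP u) => -> /eqP-> ->; rewrite t_uw eqxx.
Qed.

Lemma induced_path_sub (A : {set T}) x p : path (induced t A) x p -> {subset p <= A}.
Proof.
elim: p x => [|y p IH] x //= /andP[/and3P[_ yA _] A_p] z.
by rewrite inE => /predU1P[-> // | /(IH _ A_p)].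
Qed.

Lemma subtree_simple_path (A : {set T}) a p x :
  is_subtree t A -> a \in A -> x \in A -> simple_path t a p x -> {subset p <= A}.
Proof.
case=> _ A_conn aA xA sp.
have [q /and3P[A_q l_q u_q]] := connect_simple_path (A_conn a x aA xA).
suff -> : p = q by exact: induced_path_sub A_q.
apply: simple_path_unique sp _; rewrite /simple_path l_q u_q !andbT.
by apply: sub_path A_q => ? ? /and3P[].
Qed.

Lemma subtree_convex (A : {set T}) a b x : is_subtree t A -> a \in A -> x \in A ->
  ancestor a b -> ancestor b x -> b \in A.
Proof.
move=> A_sub aA xA; rewrite !ancestorE => /prefixP[s1 Eb] /prefixP[s2 Ex].
have := rpathP x; rewrite Ex Eb -catA => /simple_path_cat[_].
rewrite last_rpath => /(subtree_simple_path A_sub aA xA) s_A.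
have : b \in a :: s1 by rewrite -{1}(last_rpath b) Eb last_cat last_rpath mem_last.
by rewrite inE => /predU1P[-> // | b_s1]; apply: s_A; rewrite mem_cat b_s1.
Qed.

Lemma subtree_top (A : {set T}) :
  is_subtree t A -> exists2 a, a \in A & {in A, forall v, ancestor a v}.
Proof.
case=> /set0Pn[x0 x0A] A_conn.
have [a aA a_min] := arg_minnP (fun x => size (rpath x)) x0A.
exists a => // v vA.
have a_step u w : w \in A -> t u w -> ancestor a u -> ancestor a w.
  move=> wA /rpath_edge[Ew | Eu] a_u.
    by apply: ancestor_trans a_u _; rewrite ancestorE Ew prefix_rcons.
  move: a_u; rewrite /ancestor Eu -rcons_cons mem_rcons inE => /predU1P[au | //].
  by have := a_min w wA; rewrite au Eu size_rcons ltnn.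
have a_closed : closed (induced t A) [pred u | ancestor a u].
  move=> u w /and3P[uA wA t_uw]; rewrite !inE.
  by apply/idP/idP; apply: a_step; rewrite // t_sym.
by have := closed_connect a_closed (A_conn a v aA vA); rewrite !inE ancestor_refl.
Qed.

Definition rank_rpath (v : T) : seq 'I_#|T| := map enum_rank (rpath v).

Lemma branch_lt_rank_rpath a b :
  branch_lt (rank_rpath a) (rank_rpath b) || branch_lt (rank_rpath b) (rank_rpath a)
  = ~~ ancestor a b && ~~ ancestor b a.
Proof. by rewrite branch_lt_gt !prefix_map_inj ?ancestorE //; apply: enum_rank_inj. Qed.

End Tree.

Lemma strict_order_comparability (V : finType) (E o : rel V) :
  symmetric E -> subrel o E -> transitive o -> (forall x y, o x y -> ~~ o y x) ->
  comparability_subgraph E [set e | o e.1 e.2 || o e.2 e.1].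
Proof.
move=> E_sym oE o_trans o_asym; apply/and3P; split.
- by apply/subsetP=> -[x y]; rewrite !inE /= => /orP[/oE // | /oE]; rewrite E_sym.
- by apply/forallP=> x; apply/forallP=> y; rewrite !inE /= orbC implybb.
apply/existsP; exists [set e | o e.1 e.2]; apply/and3P; split.
- by apply/subsetP=> -[x y]; rewrite !inE /= => ->.
- apply/forallP=> x; apply/forallP=> y; rewrite !inE /=; apply/implyP.
  by case/orP=> oxy; rewrite oxy (negbTE (o_asym _ _ oxy)).
apply/forallP=> x; apply/forallP=> y; apply/forallP=> z; rewrite !inE /=.
by apply/implyP=> /andP[]; apply: o_trans.
Qed.

Lemma comp_partition2 (V : finType) (E : rel V) (H1 H2 : {set V * V}) :
  comparability_subgraph E H1 -> comparability_subgraph E H2 -> [disjoint H1 & H2] ->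
  edge_set E = H1 :|: H2 -> comp_partition E 2.
Proof.
move=> c1 c2 H12 EH; apply/existsP.
exists [ffun i : 'I_2 => if i == ord0 then H1 else H2]; apply/and3P; split.
- by apply/forallP=> i; rewrite ffunE; case: ifP.
- apply/forallP=> -[[|[|//]] ?]; apply/forallP=> -[[|[|//]] ?];
    by rewrite !ffunE //= disjoint_sym.
by rewrite EH big_ord_recr big_ord1 !ffunE.
Qed.

Lemma comp_partition_cover (V : finType) (E : rel V) m :
  comp_partition E m -> comp_cover E m.
Proof.
by case/existsP=> Hs /and3P[cH _ EH]; apply/existsP; exists Hs; rewrite cH EH.
Qed.

Lemma least_upto_mono (P1 P2 : pred nat) N :
  subpred P2 P1 -> least_upto P1 N <= least_upto P2 N.
Proof. by move=> P21; apply: sub_find. Qed.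

Lemma least_upto_le (P : pred nat) N k : P k -> least_upto P N <= k.
Proof.
move=> Pk; rewrite /least_upto; have [kN | Nk] := leqP k N.
  rewrite -ltnS; apply/find_ltn/hasP; exists k => //.
  by rewrite take_iota mem_iota add0n leq_min ltnSn ltnS kN.
by apply: leq_trans (find_size _ _) _; rewrite size_iota.
Qed.

Section DisjointnessGraph.
Variables (T : finType) (t : rel T).
Hypotheses (t_sym : symmetric t) (t_acyclic : acyclic t) (t_conn : connected_graph t).
Variables (r : T) (I : finType) (F : I -> {set T}).
Hypothesis F_sub : forall i, is_subtree t (F i).
Local Notation ancestor := (ancestor t_conn r).
Variable top : I -> T.
Hypotheses (top_F : forall i, top i \in F i)
  (top_anc : forall i, {in F i, forall v, ancestor (top i) v}).

Lemma incomparable_tops_disjoint u v :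
  ~~ ancestor (top u) (top v) -> ~~ ancestor (top v) (top u) -> [disjoint F u & F v].
Proof.
move=> uNv vNu; apply/pred0P=> x /=; apply/negP=> /andP[/top_anc u_x /top_anc v_x].
by case/orP: (ancestor_total t_sym t_acyclic u_x v_x); apply/negP.
Qed.

Lemma disjoint_tops_neq u v :
  [disjoint F u & F v] -> ancestor (top u) (top v) -> ~~ ancestor (top v) (top u).
Proof.
move=> duv uv; apply/negP=> /(ancestor_anti t_sym t_acyclic uv) Euv.
by have := top_F v; rewrite -Euv (disjointFr duv (top_F u)).
Qed.

Lemma disjoint_tops_trans u v w : [disjoint F u & F v] ->
  ancestor (top u) (top v) -> ancestor (top v) (top w) -> [disjoint F u & F w].
Proof.
move=> duv uv vw; apply/pred0P=> x /=; apply/negP=> /andP[u_x /top_anc w_x].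
have v_Fu := subtree_convex t_sym t_acyclic (F_sub u) (top_F u) u_x uv
  (ancestor_trans t_sym t_acyclic vw w_x).
by have := top_F v; rewrite (disjointFr duv v_Fu).
Qed.

Definition nested_disjoint u v := [disjoint F u & F v] && ancestor (top u) (top v).

Definition branch_before u v :=
  branch_lt (rank_rpath t_conn r (top u)) (rank_rpath t_conn r (top v)).

Local Notation E := (disjointness_graph F).

Lemma nested_disjoint_comparability :
  comparability_subgraph E [set e | nested_disjoint e.1 e.2 || nested_disjoint e.2 e.1].
Proof.
apply: strict_order_comparability.
- by move=> u v; apply: disjoint_sym.
- by move=> u v /andP[].
- move=> v u w /andP[duv uv] /andP[_ vw].
  rewrite /nested_disjoint (disjoint_tops_trans duv uv vw).
  by rewrite (ancestor_trans t_sym t_acyclic uv vw).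
move=> u v /andP[duv uv].
by rewrite /nested_disjoint negb_and (disjoint_tops_neq duv uv) orbT.
Qed.

Lemma branch_before_comparability :
  comparability_subgraph E [set e | branch_before e.1 e.2 || branch_before e.2 e.1].
Proof.
apply: strict_order_comparability.
- by move=> u v; apply: disjoint_sym.
- move=> u v buv; have := branch_lt_rank_rpath t_sym t_acyclic t_conn r (top u) (top v).
  rewrite -/(branch_before u v) buv => /esym/andP[].
  exact: incomparable_tops_disjoint.
- by move=> v u w; apply: branch_lt_trans.
by move=> u v; apply: branch_lt_asym.
Qed.

Lemma disjointness_graph_partition2 : comp_partition E 2.
Proof.
apply: comp_partition2 nested_disjoint_comparability branch_before_comparability _ _.
- apply/pred0P=> -[u v]; rewrite /= !inE /= /branch_before.
  rewrite (branch_lt_rank_rpath t_sym t_acyclic) /nested_disjoint.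
  by case: (ancestor (top u) (top v)); case: (ancestor (top v) (top u)); rewrite ?andbF.
apply/setP=> -[u v]; rewrite !inE /= /branch_before.
rewrite (branch_lt_rank_rpath t_sym t_acyclic) /nested_disjoint.
rewrite (disjoint_sym (F v)) -andb_orr.
have [_ | uNv] /= := boolP (ancestor (top u) (top v)); first by rewrite andbT orbF.
have [_ | vNu] /= := boolP (ancestor (top v) (top u)); first by rewrite andbT orbF.
by rewrite andbF; apply: incomparable_tops_disjoint.
Qed.

End DisjointnessGraph.

Theorem theorem6 (T : finType) (t : rel T) (I : finType) (F : I -> {set T}) :
  is_tree t ->
  (forall i, is_subtree t (F i)) ->
  c_num (disjointness_graph F) <= p_num (disjointness_graph F) <= 2.
Proof.
case=> -[t_sym t_irr] /card_gt0P[r _] t_conn t_acyclic F_sub.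
have [top top_F top_anc] := fin_all_exists2 (fun i =>
  subtree_top t_sym t_irr t_acyclic t_conn r (F_sub i)).
have part2 := disjointness_graph_partition2 t_sym t_acyclic F_sub top_F top_anc.
apply/andP; split; last exact: least_upto_le part2.
by apply: least_upto_mono; apply: comp_partition_cover.
Qed.
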